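(* Let $G$ be a strongly connected doubly stochasticable digraph of order $n\in\mathbb{Z}_{>0}$ with DS-character $\operatorname{ds}(G)$. Then for every integer $C\geq\operatorname{ds}(G)$ there exists a weight assignment $A_{\mathrm{wb}}\in\mathbb{Z}^{n\times n}_{\geq0}$ that makes $G$ a $C$-regular digraph.
   Context: A digraph $G=(V,E)$, $V=\{v_1,\dots,v_n\}$, $E\subseteq V\times V$ (self-loops allowed); strongly connected means a directed path exists between every ordered pair of distinct vertices. An adjacency matrix (weight assignment) for $G$ is $A\in\mathbb{R}^{n\times n}_{\geq0}$ with $a_{ij}>0$ iff $(v_i,v_j)\in E$; $G$ is doubly stochasticable if it admits one with all row and column sums $1$. $G$ with weights $A$ is $C$-regular if $G$ is strongly connected and all row sums and all column sums of $A$ equal $C$. A cycle is a directed path $v_{i_1},\dots,v_{i_k},v_{i_1}$ with distinct $v_{i_1},\dots,v_{i_k}$ (self-loops are cycles), viewed as a subdigraph; $\mathcal{C}(G)$ is the set of subdigraphs that are a single edgeless vertex, a cycle, or a union of pairwise vertex-disjoint cycles; a family generates $G$ if the union of vertex sets is $V$ and of edge sets is $E$. $\operatorname{ds}(G)$ is the minimum cardinality of a subset of $\mathcal{C}(G)$ generating $G$ all of whose elements contain every vertex of $G$. *)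

From HB Require Import structures.
From mathcomp Require Import all_boot all_order all_algebra.
From mathcomp Require Import Rstruct.
From Stdlib Require Rdefinitions.
Set Implicit Arguments. Unset Strict Implicit. Unset Printing Implicit Defensive.
Import Order.TTheory GRing.Theory Num.Theory.
Local Open Scope ring_scope.

(* A digraph of order n: vertex set 'I_n, edge set E (self-loops allowed). *)
Definition digraph (n : nat) := {set 'I_n * 'I_n}.

Definition strongly_connected n (E : digraph n) : Prop :=
  forall i j : 'I_n, i != j -> connect (fun x y => (x, y) \in E) i j.

Definition weight_assignment (R : numDomainType) n (E : digraph n)
    (A : 'M[R]_n) : Prop :=
  forall i j : 'I_n, 0 <= A i j /\ ((0 < A i j) <-> ((i, j) \in E)).

Definition row_sums_eq (R : numDomainType) n (A : 'M[R]_n) (c : R) : Prop :=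
  forall i : 'I_n, \sum_(j < n) A i j = c.
Definition col_sums_eq (R : numDomainType) n (A : 'M[R]_n) (c : R) : Prop :=
  forall j : 'I_n, \sum_(i < n) A i j = c.

Definition doubly_stochasticable n (E : digraph n) : Prop :=
  exists A : 'M[Rdefinitions.R]_n, weight_assignment E A /\ row_sums_eq A 1 /\ col_sums_eq A 1.

Definition C_regular (R : numDomainType) n (E : digraph n) (A : 'M[R]_n)
    (C : R) : Prop :=
  strongly_connected E /\ row_sums_eq A C /\ col_sums_eq A C.

Definition subdigraph n := ({set 'I_n} * {set 'I_n * 'I_n})%type.

(* Edge set of the cycle v_1,...,v_k,v_1 given by a duplicate-free
   nonempty sequence s = [:: v_1; ...; v_k] (next = cyclic successor). *)
Definition cycle_edges n (s : seq 'I_n) : {set 'I_n * 'I_n} :=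
  [set (x, next s x) | x in s].

Definition is_cycle_seq n (E : digraph n) (s : seq 'I_n) : Prop :=
  [/\ s != [::], uniq s & cycle_edges s \subset E].

(* Membership in C(G): a single edgeless vertex, or a union of (one or
   more) pairwise vertex-disjoint cycles of G. *)
Definition in_CG n (E : digraph n) (H : subdigraph n) : Prop :=
  (exists v : 'I_n, H = ([set v], set0))
  \/ (exists ss : seq (seq 'I_n),
        [/\ ss != [::], (forall s, s \in ss -> is_cycle_seq E s),
            uniq (flatten ss),
            H.1 = [set x in flatten ss]
          & H.2 = \bigcup_(s <- ss) cycle_edges s]).

Definition ds_family n (E : digraph n) (F : {set subdigraph n}) : Prop :=
  [/\ (forall H, H \in F -> in_CG E H),
      (forall H, H \in F -> H.1 = setT),
      \bigcup_(H in F) H.1 = setT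
    & \bigcup_(H in F) H.2 = E].

Definition is_ds n (E : digraph n) (d : nat) : Prop :=
  (exists F, ds_family E F /\ #|F| = d)
  /\ (forall F, ds_family E F -> (d <= #|F|)%N).

From HB Require Import structures.
From mathcomp Require Import all_boot all_order all_algebra.
From mathcomp Require Import Rstruct.

Set Implicit Arguments.
Unset Strict Implicit.
Unset Printing Implicit Defensive.
Import Order.TTheory GRing.Theory Num.Theory.
Local Open Scope ring_scope.

(* Every member of a ds-family with more than one vertex is a spanning union
   of disjoint cycles, so its 0/1 adjacency matrix has all row and column
   sums equal to 1. Summing these matrices over a family of size ds(G), with
   the extra weight C - ds(G) put on one member, gives an integer matrix
   with support E and all line sums C. Order 1 is treated separately since
   there the edgeless vertex also spans G. *)

Definition edge_mx (R : numDomainType) n (S : {set 'I_n * 'I_n}) : 'M[R]_n :=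
  \matrix_(i, j) (((i, j) \in S) : nat)%:R.

Section LineSums.
Variables (R : numDomainType) (n : nat) (I : finType) (P : pred I).
Variables (A : I -> 'M[R]_n) (c : I -> R).

Lemma row_sums_eq_comb :
  (forall k, P k -> row_sums_eq (A k) 1) ->
  row_sums_eq (\sum_(k | P k) c k *: A k) (\sum_(k | P k) c k).
Proof.
move=> rowA i; under eq_bigr do rewrite summxE.
rewrite exchange_big /=; apply: eq_bigr => k Pk.
by under eq_bigr do rewrite mxE; rewrite -mulr_sumr rowA // mulr1.
Qed.

Lemma col_sums_eq_comb :
  (forall k, P k -> col_sums_eq (A k) 1) ->
  col_sums_eq (\sum_(k | P k) c k *: A k) (\sum_(k | P k) c k).
Proof.
move=> colA j; under eq_bigr do rewrite summxE.
rewrite exchange_big /=; apply: eq_bigr => k Pk.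
by under eq_bigr do rewrite mxE; rewrite -mulr_sumr colA // mulr1.
Qed.

End LineSums.

Lemma weight_assignment_edge_comb (R : numDomainType) n (I : finType)
    (P : pred I) (S : I -> {set 'I_n * 'I_n}) (c : I -> R) :
  (forall k, P k -> 0 < c k) ->
  weight_assignment (\bigcup_(k | P k) S k) (\sum_(k | P k) c k *: edge_mx R (S k)).
Proof.
move=> c_gt0 i j; rewrite summxE.
have term_ge0 k : P k -> 0 <= (c k *: edge_mx R (S k)) i j.
  by move=> Pk; rewrite !mxE mulr_ge0 ?ler0n // ltW ?c_gt0.
split; first by rewrite sumr_ge0.
rewrite lt0r sumr_ge0 // andbT psumr_eq0 //; split.
- case/allPn => k _; rewrite negb_imply => /andP[Pk].
  rewrite !mxE mulf_eq0 negb_or => /andP[_ ijS]; apply/bigcupP; exists k => //.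
  by case: ((i, j) \in S k) ijS; rewrite ?eqxx.
- case/bigcupP => k Pk ijS; apply/allPn; exists k; first exact: mem_index_enum.
  by rewrite Pk !mxE ijS mulr1 gt_eqF ?c_gt0.
Qed.

Lemma sum_indicator_eq1 (R : numDomainType) n (Q : pred 'I_n) j0 :
  (forall j, Q j = (j == j0)) -> \sum_(j < n) ((Q j : nat)%:R : R) = 1.
Proof.
move=> Qj0; rewrite (bigD1 j0) //= big1 ?addr0; first by rewrite Qj0 eqxx.
by move=> j /negbTE j_neq; rewrite Qj0 j_neq.
Qed.

Lemma mem_bigcup_seq (T : finType) (I : eqType) (r : seq I) (F : I -> {set T}) x :
  (x \in \bigcup_(s <- r) F s) = has (fun s => x \in F s) r.
Proof.
elim: r => [|s r IHr]; first by rewrite big_nil in_set0.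
by rewrite big_cons in_setU IHr.
Qed.

Lemma uniq_flatten_mem_eq (T : eqType) (ss : seq (seq T)) s s' x :
  uniq (flatten ss) -> s \in ss -> s' \in ss -> x \in s -> x \in s' -> s = s'.
Proof.
elim: ss => [//|s0 ss IHss] /=; rewrite cat_uniq => /and3P[_ disj uniq_ss].
have disj_x t : t \in ss -> x \in s0 -> x \in t -> False.
  move=> tss xs0 xt; case/negP: disj; apply/hasP; exists x => //.
  by apply/flattenP; exists t.
rewrite !inE => /predU1P[->|sss] /predU1P[->|s'ss] xs xs' //.
- by case: (disj_x s').
- by case: (disj_x s).
- exact: IHss.
Qed.

Section DisjointCycles.
Variables (R : numDomainType) (n : nat) (ss : seq (seq 'I_n)).
Hypotheses (uniq_ss : forall s, s \in ss -> uniq s) (uniq_flat : uniq (flatten ss)).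

Let S := \bigcup_(s <- ss) cycle_edges s.

Lemma cycle_edges_out i s : s \in ss -> i \in s -> forall j, ((i, j) \in S) = (j == next s i).
Proof.
move=> sss i_s j; rewrite mem_bigcup_seq; apply/hasP/eqP.
- case=> s' s'ss /imsetP[x xs' [ix ->]]; subst x.
  by rewrite (uniq_flatten_mem_eq uniq_flat sss s'ss i_s xs').
- by move=> ->; exists s => //; apply/imsetP; exists i.
Qed.

Lemma cycle_edges_in j s : s \in ss -> j \in s -> forall i, ((i, j) \in S) = (i == prev s j).
Proof.
move=> sss j_s i; rewrite mem_bigcup_seq; apply/hasP/eqP.
- case=> s' s'ss /imsetP[x xs' [ix jx]]; subst x.
  have j_s' : j \in s' by rewrite jx mem_next.
  rewrite (uniq_flatten_mem_eq uniq_flat sss s'ss j_s j_s') jx.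
  by rewrite prev_next // uniq_ss.
- move=> ->; exists s => //; apply/imsetP; exists (prev s j); first by rewrite mem_prev.
  by rewrite next_prev // uniq_ss.
Qed.

Lemma edge_mx_cycles_regular :
  [set x in flatten ss] = setT ->
  row_sums_eq (edge_mx R S) 1 /\ col_sums_eq (edge_mx R S) 1.
Proof.
move=> span; have cover x : exists2 s, s \in ss & x \in s.
  by apply/flattenP; have /setP/(_ x) := span; rewrite !inE.
split=> [i|j]; under eq_bigr do rewrite mxE.
- have [s sss i_s] := cover i; exact: sum_indicator_eq1 (cycle_edges_out sss i_s).
- have [s sss j_s] := cover j; exact: sum_indicator_eq1 (cycle_edges_in sss j_s).
Qed.

End DisjointCycles.

Lemma spanning_CG_regular (R : numDomainType) n (E : digraph n) (H : subdigraph n) :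
  (1 < n)%N -> in_CG E H -> H.1 = setT ->
  row_sums_eq (edge_mx R H.2) 1 /\ col_sums_eq (edge_mx R H.2) 1.
Proof.
move=> n_gt1 [[v ->]|[ss [_ cyc_ss uniq_flat -> ->]]] /= span.
  by have := cards1 v; rewrite span cardsT card_ord => n1; rewrite n1 in n_gt1.
by apply: edge_mx_cycles_regular => // s /cyc_ss[].
Qed.

Lemma doubly_stochasticable_out_edge n (E : digraph n) i :
  doubly_stochasticable E -> exists j, (i, j) \in E.
Proof.
case=> A [wA [rowA _]].
have [j ijE|noE] := pickP (fun j => (i, j) \in E); first by exists j.
have A0 j : A i j = 0.
  have [A_ge0 [A_gt0 _]] := wA i j.
  by apply/eqP; rewrite eq_le A_ge0 andbT leNgt; apply/negP => /A_gt0; rewrite noE.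
have := rowA i; rewrite big1 => [/esym/eqP|j _]; last exact: A0.
by rewrite oner_eq0.
Qed.

Lemma sum_one_plus_at (I : finType) (A : {pred I}) i0 k :
  i0 \in A -> (\sum_(i in A) (1 + k * (i == i0)) = #|A| + k)%N.
Proof.
move=> Ai0; rewrite big_split /= sum1_card -big_distrr /=.
rewrite (bigD1 i0) //= eqxx big1 => [|i /andP[_ /negbTE->]] //.
by rewrite addn0 muln1.
Qed.

Theorem proposition3p13 (n : nat) (E : digraph n) (d : nat) :
  (0 < n)%N ->
  strongly_connected E ->
  doubly_stochasticable E ->
  is_ds E d ->
  forall C : nat, (d <= C)%N ->
  exists A : 'M[int]_n, weight_assignment E A /\ C_regular E A (C%:Z).
Proof.
move=> n_gt0 scE dsE [[F [[F_CG F_span F_cover F_E] cardF]] _] C le_dC.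
have [H0 H0F _] : exists2 H0, H0 \in F & Ordinal n_gt0 \in H0.1.
  by apply/bigcupP; rewrite F_cover inE.
have d_gt0 : (0 < d)%N by rewrite -cardF; apply/card_gt0P; exists H0.
have [n_gt1 | n_le1] := ltnP 1 n.
  pose c H := (1 + (C - d) * (H == H0))%N.
  have sum_c : \sum_(H in F) (c H)%:R = C%:Z.
    by rewrite -natr_sum sum_one_plus_at // cardF subnKC // natz.
  exists (\sum_(H in F) (c H)%:R *: edge_mx int H.2).
  split; first by rewrite -F_E; apply: weight_assignment_edge_comb => H _; rewrite ltr0n.
  split; rewrite // -sum_c; split;
    [apply: row_sums_eq_comb | apply: col_sums_eq_comb] => H HF;
    by have [] := spanning_CG_regular int n_gt1 (F_CG H HF) (F_span H HF).
have n1 : n = 1%N by apply/eqP; rewrite eqn_leq n_le1 n_gt0.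
subst n; have [j] := doubly_stochasticable_out_edge ord0 dsE; rewrite (ord1 j) => loop.
exists (const_mx C%:Z); split; last by split=> //; split=> ?; rewrite big_ord1 mxE.
move=> i k; rewrite mxE; split; first exact: le0z_nat.
split=> _; first by rewrite !ord1.
by rewrite ltz_nat (leq_trans d_gt0 le_dC).
Qed.
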